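(* Let $d\ge 2$. There exist constants $C>1$, $c\in(0,1)$ and $0<c'\le C'$, depending only on $d$, such that the following holds for every finite field $\mathbb F_q$ of characteristic greater than two. If $E,F\subset\mathbb F_q^d$ satisfy $|E||F|\ge Cq^{d+1}$, then there exists a set $E_0\subset E$ with $c'q^{-1}|E|\le|E_0|\le C'q^{-1}|E|$ such that $|\Pi(E_0,F)|\ge c\,q$.
   Context: $\mathbb F_q$ is a finite field with $q$ elements and characteristic greater than two. For $E,F\subset\mathbb F_q^d$, $\Pi(E,F)=\{x\cdot y: x\in E,\ y\in F\}$ with $x\cdot y=\sum_i x_iy_i$. *)

From HB Require Import structures.
From mathcomp Require Import all_boot all_order all_algebra all_field.
Set Implicit Arguments. Unset Strict Implicit. Unset Printing Implicit Defensive.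
Import Order.TTheory GRing.Theory Num.Theory.
Local Open Scope ring_scope.

Definition dotv (K : fieldType) (d : nat) (x y : 'rV[K]_d) : K :=
  \sum_(i < d) x 0 i * y 0 i.

Definition dotset (K : finFieldType) (d : nat) (E F : {set 'rV[K]_d}) : {set K} :=
  [set dotv x y | x in E, y in F].

From HB Require Import structures.
From mathcomp Require Import all_boot all_order all_algebra all_field.
From mathcomp Require Import zify lra.
Set Implicit Arguments. Unset Strict Implicit. Unset Printing Implicit Defensive.
Import Order.TTheory GRing.Theory Num.Theory.

(* For a point x, let S(x) be the number of pairs (y, y') in F^2 with
   x.y = x.y'.  By Cauchy-Schwarz, |F|^2 <= |{x.y : y in F}| S(x).  Summing
   S over all of F_q^d, the diagonal pairs contribute q^d |F| and every
   off-diagonal pair contributes q^(d-1) (the points of a hyperplane), so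
   S(x) is on average about |F| + |F|^2/q.  Hence if |E||F| >= 2q^(d+1),
   some x0 in E sees at least q/2 dot products with F.  Any E0 in E
   containing x0 then works; we pad x0 with |E|/q further points of E. *)

Lemma sqr_sum_le_card_sum_sqr (T : finType) (A : pred T) (a : T -> nat) :
  ((\sum_(i in A) a i) ^ 2 <= #|A| * \sum_(i in A) a i ^ 2)%N.
Proof.
rewrite -(leq_pmul2l (isT : 0 < 2)%N).
have -> : (2 * (\sum_(i in A) a i) ^ 2 =
           \sum_(i in A) \sum_(j in A) 2 * (a i * a j))%N.
  rewrite expnS expn1 big_distrl /= big_distrr /=; apply: eq_bigr => i _.
  by rewrite !big_distrr.
have -> : (2 * (#|A| * \sum_(i in A) a i ^ 2) =
           \sum_(i in A) \sum_(j in A) (a i ^ 2 + a j ^ 2))%N.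
  under [RHS]eq_bigr do rewrite big_split /= sum_nat_const.
  by rewrite big_split /= sum_nat_const -big_distrr /= mul2n -addnn.
apply: leq_sum => i _; apply: leq_sum => j _.
by have := (nat_AGM2 (a i) (a j)).1; rewrite sqrnD; lia.
Qed.

Lemma exists_subset_card_mem (T : finType) (B : {set T}) (x : T) (k : nat) :
  x \in B -> (k < #|B|)%N -> exists2 A : {set T}, A \subset B & (x \in A) && (#|A| == k.+1).
Proof.
move=> xB ltkB.
have : (0 < #|[set A : {set T} | A \subset B :\ x & #|A| == k]|)%N.
  by rewrite cards_draws bin_gt0 (cardsD1 x B) xB add1n in ltkB *.
case/card_gt0P => A; rewrite inE => /andP[sAB /eqP cardA].
have xNA : x \notin A.
  by apply/negP => /(subsetP sAB); rewrite !inE eqxx.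
exists (x |: A); first by rewrite subUset sub1set xB (subset_trans sAB) ?subD1set.
by rewrite setU11 cardsU1 xNA cardA add1n eqxx.
Qed.

Lemma exists_subset_mem_card_div (T : finType) (E : {set T}) (x0 : T) (q : nat) :
  x0 \in E -> (1 < q)%N -> (q <= #|E|)%N ->
  exists2 E0 : {set T}, E0 \subset E &
    [&& x0 \in E0, #|E| <= #|E0| * q & #|E0| * q <= 2 * #|E|]%N.
Proof.
move=> x0E q_gt1 le_qE; have E_gt0 : (0 < #|E|)%N by lia.
have [E0 sE0E /andP[x0E0 /eqP cardE0]] := exists_subset_card_mem x0E (ltn_Pdiv q_gt1 E_gt0).
exists E0; rewrite // x0E0 cardE0 ltnW ?ltn_ceil ?(ltnW q_gt1) //=.
by rewrite mulSnr mul2n -addnn leq_add ?leq_trunc_div.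
Qed.

Section DotProduct.
Variables (K : fieldType) (d : nat).
Implicit Types x y z : 'rV[K]_d.
Local Open Scope ring_scope.

Lemma dotvDl x y z : dotv (x + y) z = dotv x z + dotv y z.
Proof. by rewrite /dotv -big_split; apply: eq_bigr => j _; rewrite mxE mulrDl. Qed.

Lemma dotvZl (t : K) x z : dotv (t *: x) z = t * dotv x z.
Proof. by rewrite /dotv mulr_sumr; apply: eq_bigr => j _; rewrite mxE mulrA. Qed.

Lemma dotvBr x y z : dotv x (y - z) = dotv x y - dotv x z.
Proof. by rewrite /dotv -sumrB; apply: eq_bigr => j _; rewrite !mxE mulrBr. Qed.

Lemma dotv_surj z : z != 0 -> exists w, dotv w z = 1.
Proof.
move=> nz_z; have [i z_i] : exists i, z 0 i != 0.
  apply/existsP; apply: contraR nz_z => /existsPn z0.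
  by apply/eqP/rowP => j; rewrite mxE; apply/eqP/negbNE.
exists (\row_j (if j == i then (z 0 i)^-1 else 0)).
rewrite /dotv (bigD1 i) //= big1 => [|j /negbTE ji]; last by rewrite !mxE ji mul0r.
by rewrite !mxE eqxx mulVf // addr0.
Qed.

End DotProduct.

Lemma card_dotv_kernel (K : finFieldType) (d : nat) (z : 'rV[K]_d) : z != 0%R ->
  #|K| * #|[set x : 'rV[K]_d | dotv x z == 0%R]| = #|K| ^ d.
Proof.
move=> /dotv_surj[w wz]; set H := [set x | _].
pose f (p : K * 'rV[K]_d) := (p.2 + p.1 *: w)%R.
have dotv_f p : p.2 \in H -> dotv (f p) z = p.1.
  by rewrite inE dotvDl dotvZl wz => /eqP->; rewrite add0r mulr1.
have f_inj : {in setX [set: K] H &, injective f}.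
  move=> [t x] [t' x'] /setXP[_ Hx] /setXP[_ Hx'] e.
  have e1 : t = t' by have := dotv_f (t, x) Hx; rewrite e dotv_f.
  by move: e; rewrite /f /= e1 => /addIr->.
have -> : #|K| ^ d = #|[set: 'rV[K]_d]| by rewrite cardsT card_mx mul1n.
rewrite -[#|K|]cardsT -cardsX -(card_in_imset f_inj).
apply: eq_card => v; rewrite inE; apply/imsetP.
exists (dotv v z, v - dotv v z *: w)%R; last by rewrite /f subrK.
by rewrite !inE dotvDl -scaleNr dotvZl wz mulr1 subrr eqxx.
Qed.

Lemma dotv_image_subset_dotset (K : finFieldType) (d : nat) (E F : {set 'rV[K]_d}) x :
  x \in E -> [set dotv x y | y in F] \subset dotset E F.
Proof. by move=> xE; apply/subsetP => _ /imsetP[y yF ->]; apply: imset2_f. Qed.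

Section DotEnergy.
Variables (K : finFieldType) (d : nat) (F : {set 'rV[K]_d}).
Implicit Types x : 'rV[K]_d.
Local Notation q := #|K|.

Definition dot_fiber x (t : K) : nat := \sum_(y in F) (dotv x y == t).

Definition dot_energy x : nat :=
  \sum_(y in F) \sum_(y' in F) (dotv x y == dotv x y').

Lemma dot_energyE x : dot_energy x = (\sum_t dot_fiber x t ^ 2)%N.
Proof.
rewrite /dot_energy /dot_fiber.
under [RHS]eq_bigr => t _ do rewrite expnS expn1 big_distrl /=.
rewrite [RHS]exchange_big /=; apply: eq_bigr => y _.
under [RHS]eq_bigr => t _ do rewrite big_distrr /=.
rewrite [RHS]exchange_big /=; apply: eq_bigr => y' _.
rewrite (bigD1 (dotv x y)) //= eqxx mul1n big1 ?addn0; first by rewrite eq_sym.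
by move=> t /negbTE ht; rewrite eq_sym ht.
Qed.

Lemma sum_dot_fiber x : (\sum_t dot_fiber x t = #|F|)%N.
Proof.
rewrite /dot_fiber exchange_big /= -sum1_card; apply: eq_bigr => y _.
by rewrite (bigD1 (dotv x y)) //= eqxx big1 // => t /negbTE; rewrite eq_sym => ->.
Qed.

Lemma sqr_card_le_dot_energy x (A : {set K}) :
  [set dotv x y | y in F] \subset A -> (#|F| ^ 2 <= #|A| * dot_energy x)%N.
Proof.
move=> sub; rewrite dot_energyE -(sum_dot_fiber x).
have -> : (\sum_t dot_fiber x t = \sum_(t in A) dot_fiber x t)%N.
  rewrite [RHS]big_mkcond; apply: eq_bigr => t _; case: ifPn => // tNA.
  rewrite /dot_fiber big1 // => y yF; case: eqP => // e; case/negP: tNA.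
  by apply: (subsetP sub); rewrite -e imset_f.
apply: leq_trans (sqr_sum_le_card_sum_sqr (mem A) _) _; rewrite leq_mul2l.
by rewrite [X in (X <= _)%N]big_mkcond leq_sum ?orbT // => t _; case: ifP.
Qed.

Lemma card_dotv_eq (y y' : 'rV[K]_d) : y != y' ->
  (q * \sum_x (dotv x y == dotv x y') = q ^ d)%N.
Proof.
move=> neq; rewrite -(@card_dotv_kernel _ _ (y - y')) ?subr_eq0 //.
rewrite -sum1dep_card [in RHS]big_mkcond; congr (_ * _)%N; apply: eq_bigr => x _.
by rewrite dotvBr subr_eq0; case: eqP.
Qed.

Lemma sum_dot_energy :
  (q * \sum_x dot_energy x = #|F| * q ^ d.+1 + #|F| * (#|F| - 1) * q ^ d)%N.
Proof.
rewrite /dot_energy exchange_big big_distrr /=.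
transitivity (\sum_(y in F) (q ^ d.+1 + (#|F| - 1) * q ^ d))%N; last first.
  by rewrite big_split /= !sum_nat_const mulnA.
apply: eq_bigr => y yF; rewrite exchange_big big_distrr (big_setD1 y yF) /=.
have -> : (q * \sum_x (dotv x y == dotv x y) = q ^ d.+1)%N.
  by under eq_bigr do rewrite eqxx; rewrite sum1_card card_mx mul1n expnS.
rewrite (eq_bigr (fun=> q ^ d)%N) => [|y' /setD1P[ny' _]]; last first.
  by rewrite card_dotv_eq // eq_sym.
by rewrite sum_nat_const [in RHS](cardsD1 y F) yF add1n subn1.
Qed.

End DotEnergy.

Lemma exists_rich_point (K : finFieldType) (d : nat) (E F : {set 'rV[K]_d}) :
  (2 * #|K| ^ d.+1 <= #|E| * #|F|)%N ->
  exists2 x0, x0 \in E & (#|K| <= 2 * #|[set dotv x0 y | y in F]|)%N.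
Proof.
move=> large; apply/exists_inP; apply: contraLR large => /exists_inPn poor.
have energy_lb x :
    (#|F| ^ 2 + (if x \in E then #|F| ^ 2 else 0) <= #|K| * dot_energy F x)%N.
  case: ifPn => [xE | _]; last first.
    by rewrite addn0 -[#|K|](cardsT K) sqr_card_le_dot_energy ?subsetT.
  have := poor x xE; rewrite -ltnNge => /ltnW/leq_mul/(_ (leqnn (dot_energy F x))).
  apply: leq_trans; rewrite -mulnA addnn -mul2n leq_pmul2l //.
  exact: sqr_card_le_dot_energy.
have := leq_sum (index_enum _) (fun x (_ : true) => energy_lb x).
rewrite -big_distrr /= sum_dot_energy big_split -big_mkcond /= !sum_nat_const.
rewrite -[#|xpredT|]/#|{: 'rV[K]_d}| card_mx mul1n -ltnNge !(expnS _ d).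
have q_gt0 := ltnW (card_finNzRing_gt1 K).
set q := #|K| in q_gt0 *; set Q := (q ^ d)%N; set f := #|F|; set e := #|E|.
have Q_gt0 : (0 < Q)%N by rewrite expn_gt0 q_gt0.
move=> energy_sum; case: (posnP f) => [-> | f_gt0].
  by rewrite muln0 !muln_gt0 q_gt0 Q_gt0.
have : (f * (e * f) <= f * (q * Q))%N by nia.
by rewrite leq_pmul2l // => /leq_ltn_trans; apply; nia.
Qed.

Local Open Scope ring_scope.

Theorem theorem4p3 (R : realFieldType) (d : nat) (hd : (2 <= d)%N) :
  exists (C c c' C' : R),
    [/\ 1 < C, 0 < c < 1, 0 < c' & c' <= C'] /\
    forall (K : finFieldType), ~~ (2%N \in [pchar K]) ->
    forall (E F : {set 'rV[K]_d}),
      C * (#|K|%:R) ^+ d.+1 <= (#|E| * #|F|)%:R ->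
      exists2 E0 : {set 'rV[K]_d}, E0 \subset E &
        [/\ c' * (#|K|%:R)^-1 * #|E|%:R <= #|E0|%:R,
            #|E0|%:R <= C' * (#|K|%:R)^-1 * #|E|%:R &
            c * #|K|%:R <= #|dotset E0 F|%:R].
Proof.
exists 2, 2^-1, 1, 2; split; first by split; [lra | apply/andP; split; lra | lra | lra].
move=> K _ E F; rewrite -natrX -natrM ler_nat => large.
have [x0 x0E rich] := exists_rich_point large.
have q_gt1 := card_finNzRing_gt1 K.
have le_qE : (#|K| <= #|E|)%N.
  have : (#|F| <= #|K| ^ d)%N by have := max_card (mem F); rewrite card_mx mul1n.
  by rewrite expnS in large; nia.
have [E0 sE0E /and3P[x0E0 lower upper]] := exists_subset_mem_card_div x0E q_gt1 le_qE.
exists E0 => //; have q_gt0 : (0 : R) < #|K|%:R by rewrite ltr0n ltnW.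
split.
- by rewrite mul1r mulrC ler_pdivrMr // -natrM ler_nat.
- by rewrite mulrAC ler_pdivlMr // -!natrM ler_nat.
- have := subset_leq_card (dotv_image_subset_dotset F x0E0).
  by rewrite -!(ler_nat R) natrM in rich *; lra.
Qed.
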